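(* Let $(M,\sigma^M,\rho^M)$ be a ground module for $B\wr\mathcal{H}(d)$ with twist $\chi$ and structure map $\tau^M$ (notation as in the context), and write $\tau^M(w\otimes m)=\sum_{x\in\Sigma_d}\sigma^M_{x,w}(m)\otimes h_x$. Let $\mathrm{ind}_{1^d}^d(M^{\otimes d}):=B\wr\mathcal{H}(d)\otimes_{B^{\otimes d}}M^{\otimes d}$ and let $M\wr\widetilde{\mathcal{H}}^\chi_d$ be the $K$-module $M^{\otimes d}\otimes\widetilde{\mathcal{H}}^\chi_d$ with the $B\wr\mathcal{H}(d)$-action $(bH_w)\cdot(m\otimes n)=\sum_y(b\cdot m_y)\otimes h_yn$ where $\tau^M(w\otimes m)=\sum_ym_y\otimes h_y$ (here $\widetilde{\mathcal{H}}^\chi_d$ is its own left regular module). Then $$\tau^M:\mathrm{ind}_{1^d}^d(M^{\otimes d})\to M\wr\widetilde{\mathcal{H}}^\chi_d,\qquad H_w\otimes m\mapsto\sum_x\sigma^M_{x,w}(m)\otimes h_x,$$ is a homomorphism of $B\wr\mathcal{H}(d)$-modules. Moreover, it is an isomorphism if $\sigma^M_i$ is invertible for all $i$.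
   Context: Let $K$ be a commutative ring and $B$ a unital associative $K$-algebra, free over $K$. Fix $d\ge2$, $S,R\in B\otimes B$, $K$-linear $\sigma,\rho$ on $B\otimes B$; $Z_i$, $\phi_i$ denote $Z$, $\phi$ at tensor positions $i,i+1$ of $B^{\otimes d}$. $B\wr\mathcal{H}(d)$ is the $K$-algebra generated by $B^{\otimes d}$ and $H_1,\dots,H_{d-1}$ with braid relations, $H_i^2=S_iH_i+R_i$, $H_ib=\sigma_i(b)H_i+\rho_i(b)$ ($b\in B^{\otimes d}$); $H_w$ is defined via reduced expressions; it is assumed to have PBW bases $\{(b_{j_1}\otimes\cdots\otimes b_{j_d})H_w\}$ and $\{H_w(b_{j_1}\otimes\cdots\otimes b_{j_d})\}$ for a $K$-basis $\{b_j\}$ of $B$. For $\chi(S),\chi(R)\in K$, the twisted Hecke algebra $\widetilde{\mathcal{H}}^\chi_d$ is generated by $h_1,\dots,h_{d-1}$ with type A braid relations and $h_i^2=\chi(S)h_i+\chi(R)$. $M$ is a left $B$-module such that $S,R$ act on $M\otimes M$ by $\chi(S),\chi(R)$; $\sigma^M,\rho^M\in\mathrm{End}_K(M\otimes M)$ with $\sigma^M_i,\rho^M_i$ their actions on factors $i,i+1$ of $M^{\otimes d}$. $K\Sigma_d$ is the free $K$-module on $\Sigma_d$. For a choice map $r$ (a reduced expression $r(w)$ for each $w$, $r(1)$ empty, $r(w)=s_ir(x)$ with $x=s_iw<w$), $\tau^M:K\Sigma_d\otimes M^{\otimes d}\to M^{\otimes d}\otimes\widetilde{\mathcal{H}}^\chi_d$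 is defined by $\tau^M(1\otimes m)=m\otimes1$, $\tau^M(s_i\otimes m)=\sigma^M_i(m)\otimes h_i+\rho^M_i(m)\otimes1$, $\tau^M(w\otimes m)=\sum_y(\sigma^M_i(m_y)\otimes h_ih_y+\rho^M_i(m_y)\otimes h_y)$ if $r(w)=s_ir(x)$, $\tau^M(x\otimes m)=\sum_ym_y\otimes h_y$. Ground module: $\tau^M$ independent of $r$; for all $w,x,b,m$: $H_wb=\sum_gb_gH_g\Rightarrow\tau^M(w\otimes bm)=\sum_g(b_g\otimes1)\tau^M(g\otimes m)$; $H_wH_x=\sum_gc_gH_g$, $\tau^M(x\otimes m)=\sum_ym_y\otimes h_y\Rightarrow\sum_g(c_g\otimes1)\tau^M(g\otimes m)=\sum_y\tau^M(w\otimes m_y)(1\otimes h_y)$ ($B^{\otimes d}$ acting on the first factor, $(1\otimes h)$ right multiplication on the second). *)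

(* Abstract setting for Theorem 5.3 (wreath Hecke algebras,
   ground modules).  All tensor products are given by their universal
   properties; d = n.+2 (i.e. d >= 2). *)
From HB Require Import structures.
From mathcomp Require Import all_boot all_order all_fingroup all_algebra.
Set Implicit Arguments. Unset Strict Implicit. Unset Printing Implicit Defensive.
Import GRing.Theory.
Local Open Scope ring_scope.

Section Defs.
Variable K : comPzRingType.

Definition klinear (U V : lmodType K) (f : U -> V) :=
  forall (a : K) (x y : U), f (a *: x + y) = a *: f x + f y.

Definition kbilinear (U V X : lmodType K) (f : U -> V -> X) :=
  (forall v, klinear (fun u => f u v)) /\ (forall u, klinear (f u)).

Definition is_tensor2 (U V T : lmodType K) (t : U -> V -> T) :=
  kbilinear t /\
  forall (X : lmodType K) (f : U -> V -> X), kbilinear f ->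
    exists! g : T -> X, klinear g /\ forall u v, g (t u v) = f u v.

Definition upd (d : nat) (U : Type) (m : 'I_d -> U) (k : 'I_d) (x : U) :
  'I_d -> U := fun l => if l == k then x else m l.

Definition kmultilinear (d : nat) (U X : lmodType K) (f : ('I_d -> U) -> X) :=
  forall (m : 'I_d -> U) (k : 'I_d), klinear (fun x => f (upd m k x)).

Definition is_tensor_pow (d : nat) (U T : lmodType K) (t : ('I_d -> U) -> T) :=
  kmultilinear t /\
  forall (X : lmodType K) (f : ('I_d -> U) -> X), kmultilinear f ->
    exists! g : T -> X, klinear g /\ forall m, g (t m) = f m.

Definition is_tensor_alg2 (B B2 : algType K) (t : B -> B -> B2) :=
  is_tensor2 t /\ t 1 1 = 1 /\
  forall b c b' c', t b c * t b' c' = t (b * b') (c * c').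

Definition is_tensor_algpow (d : nat) (B Bd : algType K)
    (t : ('I_d -> B) -> Bd) :=
  is_tensor_pow t /\ t (fun _ => 1) = 1 /\
  forall x y, t x * t y = t (fun k => x k * y k).

Definition is_module (B : algType K) (M : lmodType K) (act : B -> M -> M) :=
  kbilinear act /\ (forall m, act 1 m = m) /\
  forall b c m, act (b * c) m = act b (act c m).

Definition is_kalg_morph (A C : algType K) (f : A -> C) :=
  klinear f /\ f 1 = 1 /\ forall x y, f (x * y) = f x * f y.

(* K-basis (for possibly infinite index sets) *)
Definition is_basis (V : lmodType K) (I : eqType) (e : I -> V) :=
  (forall v, exists (s : seq I) (c : I -> K), v = \sum_(i <- s) c i *: e i) /\
  (forall (s : seq I) (c : I -> K), uniq s ->
     \sum_(i <- s) c i *: e i = 0 -> forall i, i \in s -> c i = 0).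

(* balanced tensor product A (x)_{Bd} V, j : Bd -> A, act : Bd-action on V *)
Definition kbalanced (A Bd : algType K) (j : Bd -> A) (V X : lmodType K)
    (act : Bd -> V -> V) (f : A -> V -> X) :=
  kbilinear f /\ forall a b v, f (a * j b) v = f a (act b v).

Definition is_btensor (A Bd : algType K) (j : Bd -> A) (V T : lmodType K)
    (act : Bd -> V -> V) (p : A -> V -> T) :=
  kbalanced j act p /\
  forall (X : lmodType K) (f : A -> V -> X), kbalanced j act f ->
    exists! g : T -> X, klinear g /\ forall a v, g (p a v) = f a v.

Variable n : nat.

(* tensor positions i and i+1 for the generator index i : 'I_(d-1) *)
Definition posl (i : 'I_n.+1) : 'I_n.+2 := widen_ord (leqnSn n.+1) i.
Definition posr (i : 'I_n.+1) : 'I_n.+2 := lift ord0 i.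

Definition upd2 (U : Type) (m : 'I_n.+2 -> U) (i : 'I_n.+1) (a b : U) :=
  upd (upd m (posl i) a) (posr i) b.

Definition sgen (i : 'I_n.+1) : 'S_n.+2 := tperm (posl i) (posr i).
Definition wordp (s : seq 'I_n.+1) : 'S_n.+2 := (\prod_(i <- s) sgen i)%g.

Definition reduced_expr (s : seq 'I_n.+1) (w : 'S_n.+2) :=
  wordp s = w /\ forall s', wordp s' = w -> (size s <= size s')%N.

Definition choice_map (r : 'S_n.+2 -> seq 'I_n.+1) :=
  r 1%g = [::] /\ (forall w, reduced_expr (r w) w) /\
  (forall w, w != 1%g -> exists i, r w = i :: r (sgen i * w)%g).

(* product of generators along a word: H_w := wprod H (r w) *)
Definition wprod (C : pzRingType) (G : 'I_n.+1 -> C) (s : seq 'I_n.+1) : C :=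
  \prod_(i <- s) G i.

(* Phi i acts on t(m) as phi on the factors i, i+1 *)
Definition loc_ext (U U2 T : lmodType K) (tU : ('I_n.+2 -> U) -> T)
    (t2 : U -> U -> U2) (phi : U2 -> U2) (Phi : 'I_n.+1 -> T -> T) :=
  forall i, klinear (Phi i) /\
  forall (m : 'I_n.+2 -> U) (s : seq (U * U)),
    phi (t2 (m (posl i)) (m (posr i))) = \sum_(p <- s) t2 p.1 p.2 ->
    Phi i (tU m) = \sum_(p <- s) tU (upd2 m i p.1 p.2).

(* Zi i is the element z placed at tensor positions i, i+1 (1 elsewhere) *)
Definition loc_elt (B B2 Bd : algType K) (tBd : ('I_n.+2 -> B) -> Bd)
    (t2 : B -> B -> B2) (z : B2) (Zi : 'I_n.+1 -> Bd) :=
  forall i (s : seq (B * B)), z = \sum_(p <- s) t2 p.1 p.2 ->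
    Zi i = \sum_(p <- s) tBd (upd2 (fun _ => 1) i p.1 p.2).

Definition braid_rels (C : pzRingType) (G : 'I_n.+1 -> C) :=
  (forall i k : 'I_n.+1, val k = (val i).+1 -> G i * G k * G i = G k * G i * G k) /\
  (forall i k : 'I_n.+1, ((val i).+1 < val k)%N -> G i * G k = G k * G i).

Definition wreath_rels (Bd C : algType K) (f : Bd -> C) (G : 'I_n.+1 -> C)
    (Si Ri : 'I_n.+1 -> Bd) (sg rh : 'I_n.+1 -> Bd -> Bd) :=
  braid_rels G /\
  (forall i, G i * G i = f (Si i) * G i + f (Ri i)) /\
  (forall i b, G i * f b = f (sg i b) * G i + f (rh i b)).

Definition is_wreath_presentation (Bd A : algType K) (j : Bd -> A)
    (H : 'I_n.+1 -> A) (Si Ri : 'I_n.+1 -> Bd) (sg rh : 'I_n.+1 -> Bd -> Bd) :=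
  is_kalg_morph j /\ wreath_rels j H Si Ri sg rh /\
  forall (C : algType K) (f : Bd -> C) (G : 'I_n.+1 -> C),
    is_kalg_morph f -> wreath_rels f G Si Ri sg rh ->
    exists! phi : A -> C, is_kalg_morph phi /\
      (forall b, phi (j b) = f b) /\ (forall i, phi (H i) = G i).

Definition hecke_rels (C : algType K) (G : 'I_n.+1 -> C) (cS cR : K) :=
  braid_rels G /\ forall i, G i * G i = cS *: G i + cR%:A.

Definition is_hecke_presentation (Hc : algType K) (h : 'I_n.+1 -> Hc)
    (cS cR : K) :=
  hecke_rels h cS cR /\
  forall (C : algType K) (G : 'I_n.+1 -> C), hecke_rels G cS cR ->
    exists! phi : Hc -> C, is_kalg_morph phi /\ forall i, phi (h i) = G i.

(* Phi i = sigma^M_i (x) (left mult. by h_i) + rho^M_i (x) id  on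
   M^{(x)d} (x) Hc; tau_r(w (x) m) is obtained by applying Phi along r(w)
   to m (x) 1. *)
Definition tau_of (MT Hc W : Type) (one : Hc) (tW : MT -> Hc -> W)
    (Phi : 'I_n.+1 -> W -> W) (r : 'S_n.+2 -> seq 'I_n.+1)
    (w : 'S_n.+2) (v : MT) : W :=
  foldr (fun i x => Phi i x) (tW v one) (r w).

End Defs.

Section Ground.
Variables (K : comPzRingType) (n : nat).

(* The ground-module axioms (context), for the fixed choice map r.
   Lb b = (b (x) 1) acting on W = M^{(x)d} (x) Hc, Rh y = (1 (x) right mult. by y). *)
Definition is_ground_module (Bd A Hc : algType K) (MT W : lmodType K)
    (j : Bd -> A) (H : 'I_n.+1 -> A) (r : 'S_n.+2 -> seq 'I_n.+1)
    (tW : MT -> Hc -> W) (Phi : 'I_n.+1 -> W -> W)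
    (actd : Bd -> MT -> MT) (Lb : Bd -> W -> W) (Rh : Hc -> W -> W) :=
  let tau := tau_of 1 tW Phi in
  let Hw := fun w => wprod H (r w) in
  (forall r', choice_map r' -> forall w v, tau r' w v = tau r w v) /\
  (forall (w : 'S_n.+2) (b : Bd) (v : MT) (bg : 'S_n.+2 -> Bd),
     Hw w * j b = \sum_(g : 'S_n.+2) j (bg g) * Hw g ->
     tau r w (actd b v) = \sum_(g : 'S_n.+2) Lb (bg g) (tau r g v)) /\
  (forall (w x : 'S_n.+2) (v : MT) (c : 'S_n.+2 -> Bd) (s : seq (MT * Hc)),
     Hw w * Hw x = \sum_(g : 'S_n.+2) j (c g) * Hw g ->
     tau r x v = \sum_(p <- s) tW p.1 p.2 ->
     \sum_(g : 'S_n.+2) Lb (c g) (tau r g v) = \sum_(p <- s) Rh p.2 (tau r w p.1)).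

End Ground.

From HB Require Import structures.
From mathcomp Require Import all_boot all_order all_fingroup all_algebra.
From mathcomp Require Import boolp ring zify.
Set Implicit Arguments. Unset Strict Implicit. Unset Printing Implicit Defensive.
Import GRing.Theory.
Local Open Scope ring_scope.

(* The map is [F (a (x) v) := a . (v (x) 1)].  The ground module axioms are exactly
   what makes the prescribed action of [B wr H(d)] on [M^(x)d (x) H] associative, so
   [F] is well defined on the balanced tensor product and equivariant; and
   [F (H_w (x) v) = tau^M (w (x) v)].
   If every [sigma_i] is invertible, [F] is injective because [tau^M (w (x) v)] is
   unitriangular with respect to length: its [h_w]-coefficient is [sigma_w v] and
   its [h_x]-coefficients vanish for [x <> w] not shorter than [w].  Inverting
   [sigma_i] in [tau^M (s_i (x) v) = sigma_i v (x) h_i + rho_i v (x) 1] gives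
   operators on the induced module that [F] turns into right multiplication by
   [h_i]; by injectivity they satisfy the Hecke relations, hence extend to a right
   action of the Hecke algebra, and [v (x) y |-> (1 (x) v) . y] inverts [F]. *)

Section KLinear.
Variable K : comPzRingType.
Implicit Types U V T X Y : lmodType K.

Lemma klinear0 U V (f : U -> V) : klinear f -> f 0 = 0.
Proof.
move=> hf; have := hf 1 0 0; rewrite !scale1r !addr0.
by move/(congr1 (fun z => z - f 0)); rewrite subrr addrK => /esym.
Qed.

Lemma klinearD U V (f : U -> V) : klinear f -> forall x y, f (x + y) = f x + f y.
Proof. by move=> hf x y; have := hf 1 x y; rewrite !scale1r. Qed.

Lemma klinearZ U V (f : U -> V) : klinear f -> forall a x, f (a *: x) = a *: f x.
Proof. by move=> hf a x; have := hf a x 0; rewrite !addr0 (klinear0 hf) addr0. Qed.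

Lemma klinearN U V (f : U -> V) : klinear f -> forall x, f (- x) = - f x.
Proof. by move=> hf x; rewrite -scaleN1r (klinearZ hf) scaleN1r. Qed.

Lemma klinearB U V (f : U -> V) : klinear f -> forall x y, f (x - y) = f x - f y.
Proof. by move=> hf x y; rewrite (klinearD hf) (klinearN hf). Qed.

Lemma klinear_sum U V (f : U -> V) : klinear f ->
  forall (I : Type) (s : seq I) (P : pred I) (F : I -> U),
  f (\sum_(i <- s | P i) F i) = \sum_(i <- s | P i) f (F i).
Proof. by move=> hf I s P F; apply: (big_morph f (klinearD hf) (klinear0 hf)). Qed.

Lemma klinear_comp U V X (f : U -> V) (g : V -> X) :
  klinear f -> klinear g -> klinear (fun x => g (f x)).
Proof. by move=> hf hg a x y; rewrite hf hg. Qed.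

Lemma klinear_id U : klinear (fun x : U => x).
Proof. by []. Qed.

Lemma klinear_zero U V : klinear (fun _ : U => 0 : V).
Proof. by move=> a x y; rewrite scaler0 addr0. Qed.

Lemma klinear_add U V (f g : U -> V) :
  klinear f -> klinear g -> klinear (fun x => f x + g x).
Proof. by move=> hf hg a x y; rewrite hf hg scalerDr addrACA. Qed.

Lemma klinear_scale U V (c : K) (f : U -> V) :
  klinear f -> klinear (fun x => c *: f x).
Proof. by move=> hf a x y; rewrite hf scalerDr !scalerA mulrC. Qed.

Lemma klinear_opp U V (f : U -> V) : klinear f -> klinear (fun x => - f x).
Proof. by move=> hf a x y; rewrite hf opprD scalerN. Qed.

Lemma kbilinearl U V X (f : U -> V -> X) : kbilinear f -> forall v, klinear (f^~ v).
Proof. by case. Qed.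

Lemma kbilinearr U V X (f : U -> V -> X) : kbilinear f -> forall u, klinear (f u).
Proof. by case. Qed.

Lemma kbilinear_comp U V X Y (f : U -> V -> X) (g : X -> Y) :
  kbilinear f -> klinear g -> kbilinear (fun u v => g (f u v)).
Proof.
by move=> [fl fr] hg; split=> [v|u]; apply: klinear_comp.
Qed.

Lemma tensor2_ext U V T X (t : U -> V -> T) (g1 g2 : T -> X) :
  is_tensor2 t -> klinear g1 -> klinear g2 ->
  (forall u v, g1 (t u v) = g2 (t u v)) -> forall z, g1 z = g2 z.
Proof.
case=> tb univ h1 h2 e.
case: (univ X _ (kbilinear_comp tb h1)) => g [_ gu].
move=> z; rewrite -(gu g1 (conj h1 (fun _ _ => erefl))).
by rewrite (gu g2 (conj h2 (fun u v => esym (e u v)))).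
Qed.

Lemma tensor2_lift U V T X (t : U -> V -> T) (f : U -> V -> X) :
  is_tensor2 t -> kbilinear f ->
  exists g : T -> X, klinear g /\ forall u v, g (t u v) = f u v.
Proof. by case=> _ univ fb; case: (univ X f fb) => g [gp _]; exists g. Qed.

Lemma tensor_pow_ext (d : nat) U T X (t : ('I_d -> U) -> T) (g1 g2 : T -> X) :
  is_tensor_pow t -> klinear g1 -> klinear g2 ->
  (forall m, g1 (t m) = g2 (t m)) -> forall z, g1 z = g2 z.
Proof.
case=> tm univ h1 h2 e.
have fm : kmultilinear (fun m => g1 (t m)) by move=> m k; exact: klinear_comp.
case: (univ X _ fm) => g [_ gu].
move=> z; rewrite -(gu g1 (conj h1 (fun _ => erefl))).
by rewrite (gu g2 (conj h2 (fun m => esym (e m)))).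
Qed.

Section BalancedTensor.
Variables (A Bd : algType K) (j : Bd -> A) (V T : lmodType K).
Variables (act : Bd -> V -> V) (p : A -> V -> T).
Hypothesis Hp : is_btensor j act p.

Lemma btensor_ext X (g1 g2 : T -> X) : klinear g1 -> klinear g2 ->
  (forall a v, g1 (p a v) = g2 (p a v)) -> forall z, g1 z = g2 z.
Proof.
case: Hp => [[pb pbal] univ] h1 h2 e.
have fb : kbalanced j act (fun a v => g1 (p a v)).
  by split; [exact: kbilinear_comp | move=> a b v /=; rewrite pbal].
case: (univ X _ fb) => g [_ gu].
move=> z; rewrite -(gu g1 (conj h1 (fun _ _ => erefl))).
by rewrite (gu g2 (conj h2 (fun a v => esym (e a v)))).
Qed.

Lemma btensor_lift X (f : A -> V -> X) : kbalanced j act f ->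
  exists g : T -> X, klinear g /\ forall a v, g (p a v) = f a v.
Proof. by case: Hp => _ univ fb; case: (univ X f fb) => g [gp _]; exists g. Qed.

Definition pure_sum (z : T) := exists s : seq (A * V), z = \sum_(q <- s) p q.1 q.2.

Definition pure_sumb : {pred T} := fun z => `[< pure_sum z >].

Lemma pure_sumb_closed : subsemimod_closed pure_sumb.
Proof.
have pZ a x : p (a *: x.1) x.2 = a *: p x.1 x.2.
  by case: Hp => [[pb _] _]; rewrite (klinearZ (kbilinearl pb x.2)).
split; first split.
- by apply/asboolP; exists [::]; rewrite big_nil.
- by move=> _ _ /asboolP[s1 ->] /asboolP[s2 ->]; apply/asboolP; exists (s1 ++ s2); rewrite big_cat.
- move=> a _ /asboolP[s ->]; apply/asboolP; exists [seq (a *: q.1, q.2) | q <- s].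
  by rewrite big_map scaler_sumr; apply: eq_bigr => q _; rewrite pZ.
Qed.

Record pure_span := PureSpan { pure_span_val :> T; _ : pure_span_val \in pure_sumb }.
HB.instance Definition _ := [isSub for pure_span_val].
HB.instance Definition _ := [Choice of pure_span by <:].
HB.instance Definition _ :=
  GRing.SubChoice_isSubLmodule.Build K T pure_sumb pure_span pure_sumb_closed.

(* Co-restricting [p] to the span of its values and composing with the inclusion
   gives a linear map that agrees with the identity on pure tensors. *)
Lemma btensor_pure_sum z : pure_sum z.
Proof.
case: (Hp) => [[pb pbal] _].
have inP a v : p a v \in pure_sumb by apply/asboolP; exists [:: (a, v)]; rewrite big_seq1.
have fb : kbalanced j act (fun a v => PureSpan (inP a v) : pure_span).
  split; first split.
  - by move=> v c x y; apply: val_inj => /=; apply: (kbilinearl pb v).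
  - by move=> a c x y; apply: val_inj => /=; apply: (kbilinearr pb a).
  - by move=> a b v; apply: val_inj; rewrite /= pbal.
case: (btensor_lift fb) => g [gl gp].
have vl : klinear (fun x : pure_span => val x) by move=> c x y; exact: linearP.
have e := btensor_ext (klinear_comp gl vl) (@klinear_id T) (fun a v => congr1 val (gp a v)).
by rewrite -(e z); apply/asboolP; exact: (valP (g z)).
Qed.

End BalancedTensor.
End KLinear.

Section EndoAlgebra.
Variables (K : comPzRingType) (V : lmodType K).

Record kendo := KEndo { kendo_fun :> V -> V; _ : `[< klinear kendo_fun >] }.
HB.instance Definition _ := [isSub for kendo_fun].
HB.instance Definition _ := [Choice of kendo by <:].

Lemma kendo_linear (f : kendo) : klinear f.
Proof. by case: f => g /= /asboolP. Qed.

Lemma kendoP (f g : kendo) : f =1 g -> f = g.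
Proof. by move=> e; apply: val_inj; apply: funext. Qed.

Definition kendo_of (f : V -> V) (fl : klinear f) : kendo := KEndo (asboolT fl).

Definition kendo_add (f g : kendo) := kendo_of (klinear_add (kendo_linear f) (kendo_linear g)).
Definition kendo_zero := kendo_of (@klinear_zero K V V).
Definition kendo_opp (f : kendo) := kendo_of (klinear_opp (kendo_linear f)).
Definition kendo_scale (c : K) (f : kendo) := kendo_of (klinear_scale c (kendo_linear f)).

Lemma kendo_addA : associative kendo_add.
Proof. by move=> f g k; apply: kendoP => x /=; rewrite addrA. Qed.
Lemma kendo_addC : commutative kendo_add.
Proof. by move=> f g; apply: kendoP => x /=; rewrite addrC. Qed.
Lemma kendo_add0 : left_id kendo_zero kendo_add.
Proof. by move=> f; apply: kendoP => x /=; rewrite add0r. Qed.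
Lemma kendo_addN : left_inverse kendo_zero kendo_opp kendo_add.
Proof. by move=> f; apply: kendoP => x /=; rewrite addNr. Qed.
HB.instance Definition _ :=
  GRing.isZmodule.Build kendo kendo_addA kendo_addC kendo_add0 kendo_addN.

Lemma kendo_scaleA a b f : kendo_scale a (kendo_scale b f) = kendo_scale (a * b) f.
Proof. by apply: kendoP => x /=; rewrite scalerA. Qed.
Lemma kendo_scale1 : left_id 1 kendo_scale.
Proof. by move=> f; apply: kendoP => x /=; rewrite scale1r. Qed.
Lemma kendo_scaleDr : right_distributive kendo_scale kendo_add.
Proof. by move=> a f g; apply: kendoP => x /=; rewrite scalerDr. Qed.
Lemma kendo_scaleDl f : {morph kendo_scale^~ f : a b / a + b >-> kendo_add a b}.
Proof. by move=> a b; apply: kendoP => x /=; rewrite scalerDl. Qed.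
HB.instance Definition _ := GRing.Zmodule_isLmodule.Build K kendo
  kendo_scaleA kendo_scale1 kendo_scaleDr kendo_scaleDl.

(* [rev = true] composes in the opposite order, so that algebra morphisms into it
   are right actions.  The witness [v0 != 0] is only there because [algType]s are
   nontrivial rings. *)
Definition kendo_alg (rev : bool) (v0 : V) (nz_v0 : v0 != 0) : Type := kendo.
HB.instance Definition _ rev v0 (nz_v0 : v0 != 0) :=
  GRing.Lmodule.on (kendo_alg rev nz_v0).

Section Composition.
Variables (rev : bool) (v0 : V) (nz_v0 : v0 != 0).
Local Notation L := (kendo_alg rev nz_v0).

Definition kendo_comp (f g : kendo) (x : V) : V := if rev then g (f x) else f (g x).

Lemma kendo_comp_linear f g : klinear (kendo_comp f g).
Proof.
by rewrite /kendo_comp; case: rev => /=; apply: klinear_comp; apply: kendo_linear.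
Qed.

Definition kendo_mul (f g : L) : L := kendo_of (kendo_comp_linear f g).
Definition kendo_one : L := kendo_of (@klinear_id K V).

Lemma kendo_mulE (f g : L) x : kendo_mul f g x = if rev then g (f x) else f (g x).
Proof. by []. Qed.

Lemma kendo_mulA : associative kendo_mul.
Proof. by move=> f g k; apply: kendoP => x; rewrite !kendo_mulE /=; case: rev. Qed.
Lemma kendo_mul1 : left_id kendo_one kendo_mul.
Proof. by move=> f; apply: kendoP => x; rewrite !kendo_mulE /=; case: rev. Qed.
Lemma kendo_mulr1 : right_id kendo_one kendo_mul.
Proof. by move=> f; apply: kendoP => x; rewrite !kendo_mulE /=; case: rev. Qed.
Lemma kendo_mulDl : left_distributive kendo_mul kendo_add.
Proof.
move=> f g k; apply: kendoP => x; rewrite !kendo_mulE /= /kendo_comp.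
by case: rev => //=; rewrite (klinearD (kendo_linear k)).
Qed.
Lemma kendo_mulDr : right_distributive kendo_mul kendo_add.
Proof.
move=> f g k; apply: kendoP => x; rewrite !kendo_mulE /= /kendo_comp.
by case: rev => //=; rewrite (klinearD (kendo_linear f)).
Qed.
Lemma kendo_one_neq0 : kendo_one != 0 :> L.
Proof. by apply: contra_neq nz_v0 => /(congr1 (fun f : L => f v0)). Qed.
HB.instance Definition _ := GRing.Zmodule_isNzRing.Build L
  kendo_mulA kendo_mul1 kendo_mulr1 kendo_mulDl kendo_mulDr kendo_one_neq0.

Lemma kendo_scaleAl (a : K) (f g : L) : a *: (f * g) = (a *: f) * g.
Proof.
apply: kendoP => x; rewrite !kendo_mulE /= /kendo_comp.
by case: rev => //=; rewrite (klinearZ (kendo_linear g)).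
Qed.
HB.instance Definition _ := GRing.Lmodule_isLalgebra.Build K L kendo_scaleAl.
Lemma kendo_scaleAr (a : K) (f g : L) : a *: (f * g) = f * (a *: g).
Proof.
apply: kendoP => x; rewrite !kendo_mulE /= /kendo_comp.
by case: rev => //=; rewrite (klinearZ (kendo_linear f)).
Qed.
HB.instance Definition _ := GRing.Lalgebra_isAlgebra.Build K L kendo_scaleAr.

Lemma kendo_algM (f g : L) x : (f * g) x = if rev then g (f x) else f (g x).
Proof. exact: kendo_mulE. Qed.

End Composition.
End EndoAlgebra.

Section HeckeActions.
Variables (K : comPzRingType) (n : nat) (Hc : algType K) (h : 'I_n.+1 -> Hc).
Variables (cS cR : K).
Hypothesis HHc : is_hecke_presentation h cS cR.

Definition hecke_action (V : lmodType K) (rev : bool) (ev : Hc -> V -> V) :=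
  [/\ forall y, klinear (ev y),
      forall a y y' x, ev (a *: y + y') x = a *: ev y x + ev y' x,
      forall x, ev 1 x = x &
      forall y y' x, ev (y * y') x = if rev then ev y' (ev y x) else ev y (ev y' x)].

Definition hecke_endo_rels (V : lmodType K) (G : 'I_n.+1 -> V -> V) :=
  [/\ forall i, klinear (G i),
      forall i x, G i (G i x) = cS *: G i x + cR *: x,
      forall i k : 'I_n.+1, val k = (val i).+1 ->
        forall x, G i (G k (G i x)) = G k (G i (G k x)) &
      forall i k : 'I_n.+1, ((val i).+1 < val k)%N -> forall x, G i (G k x) = G k (G i x)].

Lemma kalg_morph_hecke_rels (C : algType K) (f : Hc -> C) : is_kalg_morph f ->
  hecke_rels (fun i => f (h i)) cS cR.
Proof.
case=> fl [f1 fM]; case: HHc => [[[hb hc] hq] _].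
split; first by split=> i k e; rewrite -!fM; [rewrite hb | rewrite hc].
by move=> i; rewrite -fM hq (klinearD fl) !(klinearZ fl) f1.
Qed.

Lemma trivial_lmod (V : lmodType K) : ~ (exists v0 : V, v0 != 0) -> forall v : V, v = 0.
Proof. by move=> nz v; apply/eqP/negPn/negP => hv; apply: nz; exists v. Qed.

Lemma hecke_action_exists (V : lmodType K) (rev : bool) (G : 'I_n.+1 -> V -> V) :
  hecke_endo_rels G -> exists ev, hecke_action rev ev /\ forall i x, ev (h i) x = G i x.
Proof.
move=> [Gl Gq Gb Gc].
case: (pselect (exists v0 : V, v0 != 0)) => [[v0 nz_v0]|/trivial_lmod triv]; last first.
  exists (fun _ _ => 0); split=> [|i x]; last exact/esym/triv.
  by split=> [y|*|*|*]; [apply: klinear_zero | exact/esym/triv ..].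
pose GL i : kendo_alg rev nz_v0 := kendo_of (Gl i).
have GLrels : hecke_rels GL cS cR.
  split; [split=> i k e | move=> i]; apply: kendoP => x; rewrite !kendo_algM /=.
  - by case: ifP => hr; rewrite ?hr (Gb _ _ e).
  - by case: ifP => hr; rewrite ?hr (Gc _ _ e).
  - by rewrite Gq if_same.
case: HHc => _ /(_ _ GL GLrels) [phi [[[pl [p1 pM]] ph] _]].
exists (fun y x => phi y x); split; last by move=> i x; rewrite ph.
split=> [y|a y y' x|x|y y' x]; first exact: kendo_linear.
- by rewrite pl.
- by rewrite p1.
- by rewrite pM kendo_algM.
Qed.

Lemma hecke_action_uniq (V : lmodType K) (rev : bool) (ev1 ev2 : Hc -> V -> V) :
  hecke_action rev ev1 -> hecke_action rev ev2 ->
  (forall i x, ev1 (h i) x = ev2 (h i) x) -> forall y x, ev1 y x = ev2 y x.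
Proof.
move=> [l1 a1 o1 m1] [l2 a2 o2 m2] e.
case: (pselect (exists v0 : V, v0 != 0)) => [[v0 nz_v0]|/trivial_lmod triv]; last first.
  by move=> y x; rewrite (triv (ev1 y x)) (triv (ev2 y x)).
pose phi1 y : kendo_alg rev nz_v0 := kendo_of (l1 y).
pose phi2 y : kendo_alg rev nz_v0 := kendo_of (l2 y).
have mor1 : is_kalg_morph phi1.
  split=> [a y y'|]; first by apply: kendoP => x /=; rewrite a1.
  by split=> [|y y']; apply: kendoP => x; rewrite ?kendo_algM /= ?o1 ?m1.
have mor2 : is_kalg_morph phi2.
  split=> [a y y'|]; first by apply: kendoP => x /=; rewrite a2.
  by split=> [|y y']; apply: kendoP => x; rewrite ?kendo_algM /= ?o2 ?m2.
case: HHc => _ /(_ _ _ (kalg_morph_hecke_rels mor1)) [phi [_ phi_uniq]].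
have phi1E : phi = phi1 by apply: phi_uniq.
have phi2E : phi = phi2 by apply: phi_uniq; split=> // i; apply: kendoP => x /=; rewrite e.
by move=> y x; rewrite -[ev1 y x]/(phi1 y x) -phi1E phi2E.
Qed.

(* Uniqueness applied to the product action [(x, x') |-> (ev y x, ev' y x')] on
   [V * V'] and to its conjugate by the shear [(x, x') |-> (x, x' + f x)]: they
   agree on the generators exactly when [f] intertwines them. *)
Lemma hecke_action_intertwine (V V' : lmodType K) (rev : bool)
    (ev : Hc -> V -> V) (ev' : Hc -> V' -> V') (f : V -> V') :
  hecke_action rev ev -> hecke_action rev ev' -> klinear f ->
  (forall i x, f (ev (h i) x) = ev' (h i) (f x)) -> forall y x, f (ev y x) = ev' y (f x).
Proof.
move=> [l a o m] [l' a' o' m'] fl fh y x.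
pose shear (p : V * V') := (p.1, p.2 + f p.1).
pose unshear (p : V * V') := (p.1, p.2 - f p.1).
have shearK p : unshear (shear p) = p by case: p => u u'; rewrite /unshear /= addrK.
have unshearK p : shear (unshear p) = p by case: p => u u'; rewrite /shear /= subrK.
have shear_lin : klinear shear.
  by move=> c [u u'] [w w']; congr pair; rewrite /= (klinearD fl) (klinearZ fl) scalerDr addrACA.
have unshear_lin : klinear unshear.
  move=> c [u u'] [w w']; congr pair.
  by rewrite /= (klinearD fl) (klinearZ fl) opprD scalerDr scalerN addrACA.
pose D y (p : V * V') := (ev y p.1, ev' y p.2).
pose D' y p := shear (D y (unshear p)).
have D_act : hecke_action rev D.
  split=> [y' c [u u'] [w w']|c y1 y2 [u u']|[u u']|y1 y2 [u u']]; rewrite /D /=.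
  - by rewrite l l'.
  - by rewrite a a'.
  - by rewrite o o'.
  - by rewrite m m'; case: ifP.
have D'_act : hecke_action rev D'.
  split=> [y'|c y1 y2 p|p|y1 y2 p]; rewrite /D'.
  - by apply: klinear_comp shear_lin; apply: klinear_comp unshear_lin _; case: D_act.
  - by case: D_act => _ -> _ _; rewrite (klinearD shear_lin) (klinearZ shear_lin).
  - by case: D_act => _ _ -> _; rewrite unshearK.
  - by case: D_act => _ _ _ ->; case: ifP; rewrite shearK.
have DD' i p : D (h i) p = D' (h i) p.
  case: p => u u'; rewrite /D' /D /=; congr pair.
  by rewrite (klinearB (l' _)) -fh subrK.
have := hecke_action_uniq D_act D'_act DD' y (x, 0).
rewrite /D' /D /= => -[]; rewrite sub0r (klinearN (l' y)) (klinear0 (l' y)).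
by move/eqP; rewrite eq_sym addrC subr_eq0 => /eqP.
Qed.

End HeckeActions.

Section Permutations.
Variable n : nat.
Local Notation S := ('S_n.+2).
Local Notation N := n.+2.

Definition ascent (i : 'I_n.+1) (x : S) : bool := (x (posl i) < x (posr i))%N.
Definition si (i : 'I_n.+1) (x : S) : S := (sgen i * x)%g.

Lemma posl_neq_posr (i : 'I_n.+1) : posl i != posr i.
Proof. by apply/eqP => /(congr1 val) /=; rewrite /bump /=; lia. Qed.

Lemma ord_neq (a b : 'I_N) : val a != val b -> a != b.
Proof. by apply: contra => /eqP ->. Qed.

Lemma pos_adjacent (i k : 'I_n.+1) : val k = (val i).+1 ->
  [/\ posl k = posr i, posl i != posr k & posr i != posr k].
Proof.
move=> e; split; first by apply: val_inj; rewrite /= e.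
all: by apply: ord_neq; move: e; rewrite /= /bump /=; lia.
Qed.

Lemma pos_far (i k : 'I_n.+1) : ((val i).+1 < val k)%N ->
  [/\ posl i != posl k, posl i != posr k, posr i != posl k & posr i != posr k].
Proof.
move=> e; have {}e : ((nat_of_ord i).+1 < nat_of_ord k)%N := e.
by split; apply: ord_neq; rewrite /= /bump /=; lia.
Qed.

Lemma siK (i : 'I_n.+1) : involutive (si i).
Proof. by move=> x; rewrite /si tpermKg. Qed.

Lemma si_inj (i : 'I_n.+1) : injective (si i).
Proof. exact: inv_inj (siK i). Qed.

Lemma si_posl (i : 'I_n.+1) y : si i y (posl i) = y (posr i).
Proof. by rewrite /si permM /sgen tpermL. Qed.

Lemma si_posr (i : 'I_n.+1) y : si i y (posr i) = y (posl i).
Proof. by rewrite /si permM /sgen tpermR. Qed.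

Lemma si_other (i : 'I_n.+1) y p : posl i != p -> posr i != p -> si i y p = y p.
Proof. by move=> h1 h2; rewrite /si permM /sgen tpermD. Qed.

Lemma perm_val_neq (x : S) (p q : 'I_N) : p != q -> val (x p) != val (x q).
Proof. by apply: contra => /eqP /val_inj /perm_inj ->. Qed.

Lemma ascent_si (i : 'I_n.+1) x : ascent i (si i x) = ~~ ascent i x.
Proof.
rewrite /ascent si_posl si_posr; have := perm_val_neq x (posl_neq_posr i).
by case: (x (posl i)) => a ha; case: (x (posr i)) => b hb /=; lia.
Qed.

Lemma ascent_si_far (i k : 'I_n.+1) x :
  posl k != posl i -> posr k != posl i -> posl k != posr i -> posr k != posr i ->
  ascent i (si k x) = ascent i x.
Proof. by move=> *; rewrite /ascent !si_other. Qed.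

Lemma sgen_braid (i k : 'I_n.+1) : val k = (val i).+1 ->
  (sgen i * (sgen k * sgen i) = sgen k * (sgen i * sgen k))%g.
Proof.
case/pos_adjacent => e1 d1 d2.
have conjE (a b : 'I_n.+1) : (sgen a * (sgen b * sgen a) = sgen b ^ sgen a)%g.
  by rewrite /conjg /sgen tpermV.
have d3 : posr i != posl i by rewrite eq_sym posl_neq_posr.
have d4 : posr k != posl i by rewrite eq_sym.
by rewrite !conjE /sgen !tpermJ e1 tpermR tpermL (tpermD d1) ?(tpermD d3 d4) // eq_sym.
Qed.

Lemma sgen_commute (i k : 'I_n.+1) : ((val i).+1 < val k)%N ->
  (sgen i * sgen k = sgen k * sgen i)%g.
Proof.
case/pos_far => q1 q2 q3 q4.
have : (sgen k ^ sgen i = sgen k)%g by rewrite /sgen tpermJ !tpermD // eq_sym.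
rewrite /conjg /sgen tpermV => {2}<-.
by rewrite -!mulgA tperm2 mulg1.
Qed.

Lemma si_braid (i k : 'I_n.+1) x : val k = (val i).+1 ->
  si i (si k (si i x)) = si k (si i (si k x)).
Proof. by move=> e; rewrite /si !mulgA -(mulgA (sgen i)) sgen_braid // !mulgA. Qed.

Lemma si_commute (i k : 'I_n.+1) x : ((val i).+1 < val k)%N ->
  si i (si k x) = si k (si i x).
Proof. by move=> e; rewrite /si !mulgA sgen_commute. Qed.

Lemma sgen_inj : injective (@sgen n).
Proof.
move=> k i e; have := congr1 (fun s : S => s (posl k)) e; rewrite /sgen tpermL.
case: tpermP => [e1 _|e1|_ _ e2]; first exact/val_inj/(congr1 val e1).
- by move/(congr1 val) => /=; move/(congr1 val): e1 => /=; rewrite /bump /=; lia.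
- by have := posl_neq_posr k; rewrite e2 eqxx.
Qed.

Definition ninv (x : S) : nat :=
  (\sum_(p : 'I_N * 'I_N) ((p.1 < p.2) && (x p.2 < x p.1)))%N.

Lemma sgen_val (i : 'I_n.+1) (a : 'I_N) :
  nat_of_ord (sgen i a) =
  if nat_of_ord a == nat_of_ord i then (nat_of_ord i).+1
  else if nat_of_ord a == (nat_of_ord i).+1 then nat_of_ord i else nat_of_ord a.
Proof.
rewrite /sgen; case: tpermP => [->|->|h1 h2] /=; rewrite /bump /= ?add1n ?eqxx //.
  by case: eqP => //; lia.
have {}h1 : nat_of_ord a != nat_of_ord (posl i) by apply/eqP => /val_inj.
have {}h2 : nat_of_ord a != nat_of_ord (posr i) by apply/eqP => /val_inj.
by move: h1 h2; rewrite /= /bump /= add1n; do 2 case: eqP => //; lia.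
Qed.

Lemma sgen_ltn (i : 'I_n.+1) (a b : 'I_N) :
  (a, b) != (posl i, posr i) -> (a, b) != (posr i, posl i) ->
  (sgen i a < sgen i b)%N = (a < b)%N.
Proof.
rewrite !xpair_eqE !sgen_val; case: a => a ha; case: b => b hb => h1 h2.
have {}h1 : ~~ ((a == nat_of_ord (posl i)) && (b == nat_of_ord (posr i))) := h1.
have {}h2 : ~~ ((a == nat_of_ord (posr i)) && (b == nat_of_ord (posl i))) := h2.
move: h1 h2; rewrite /= /bump /= !add1n => h1 h2.
by repeat case: ifP => ?; apply/idP/idP; lia.
Qed.

(* Relabelling positions by [s_i] fixes the set of pairs other than [(i, i+1)] and
   [(i+1, i)], and preserves their order; these two pairs account for the change
   of one inversion. *)
Lemma ninv_si (i : 'I_n.+1) (x : S) :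
  (ninv (si i x) + ~~ ascent i x = ninv x + ascent i x)%N.
Proof.
pose t := sgen i; pose swap (p : 'I_N * 'I_N) := (t p.1, t p.2).
have swapK : involutive swap by move=> [a b]; rewrite /swap /t /sgen /= !tpermK.
have -> : ninv (si i x) = (\sum_(p : 'I_N * 'I_N) ((t p.1 < t p.2) && (x p.2 < x p.1)))%N.
  rewrite /ninv (reindex_inj (inv_inj swapK)); apply: eq_bigr => -[a b] _.
  by rewrite /= /si !permM /t /sgen !tpermK.
pose P0 := (posl i, posr i); pose P1 := (posr i, posl i).
have P10 : P1 != P0 by rewrite xpair_eqE eq_sym (negbTE (posl_neq_posr i)).
rewrite /ninv (bigD1 P0) // (bigD1 P1) //= [in RHS](bigD1 P0) // [in RHS](bigD1 P1) //=.
rewrite (eq_bigr (fun p : 'I_N * 'I_N => nat_of_bool ((p.1 < p.2) && (x p.2 < x p.1))%N)).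
  2: by move=> [a b] /andP [h1 h2] /=; rewrite sgen_ltn.
rewrite /t /sgen tpermL tpermR /ascent /=; have := perm_val_neq x (posl_neq_posr i).
rewrite /bump /=; case: (x (posl i)) => a ha; case: (x (posr i)) => b hb /= nab.
by case: (ltngtP a b) => h; rewrite /= ?add1n ?ltnn; lia.
Qed.

Lemma ninv1 : ninv 1 = 0%N.
Proof. by rewrite /ninv big1 // => -[a b] _; rewrite !perm1 /=; case: ltngtP. Qed.

Lemma ninv_si_ascent (i : 'I_n.+1) x : ascent i x -> ninv (si i x) = (ninv x).+1.
Proof. by move=> h; have := ninv_si i x; rewrite h /=; lia. Qed.

Lemma ninv_si_descent (i : 'I_n.+1) x : ~~ ascent i x -> ninv x = (ninv (si i x)).+1.
Proof. by move=> h; have := ninv_si i x; rewrite (negbTE h) /=; lia. Qed.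

Lemma wordp_nil : wordp [::] = 1%g :> S.
Proof. by rewrite /wordp big_nil. Qed.

Lemma wordp_cons (i : 'I_n.+1) s : wordp (i :: s) = si i (wordp s).
Proof. by rewrite /wordp big_cons. Qed.

Lemma ninv_wordp (s : seq 'I_n.+1) : (ninv (wordp s) <= size s)%N.
Proof.
elim: s => [|i s IH]; first by rewrite wordp_nil ninv1.
by rewrite wordp_cons /=; have := ninv_si i (wordp s); case: ascent => /=; lia.
Qed.

Local Open Scope nat_scope.

Lemma ascents_perm1 (x : S) : (forall i, ascent i x) -> x = 1%g.
Proof.
move=> hx.
have incr k : (k.+1 < N)%N -> (x (inord k) < x (inord k.+1))%N.
  move=> hk; have := hx (inord k); rewrite /ascent.
  have -> : posl (inord k : 'I_n.+1) = inord k by apply: val_inj; rewrite /= !inordK //; lia.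
  suff -> : posr (inord k : 'I_n.+1) = inord k.+1 by [].
  by apply: val_inj; rewrite /= /bump /= !inordK //; lia.
have lower k : (k < N)%N -> (k <= x (inord k))%N.
  by elim: k => [|k IH] hk //; have := incr k hk; have := IH (ltnW hk); lia.
have upper m : (m < N)%N -> (x (inord (N.-1 - m)) <= N.-1 - m)%N.
  elim: m => [|m IH] hm; first by rewrite subn0; have := ltn_ord (x (inord N.-1)); lia.
  have := IH (ltnW hm); have := incr (N.-1 - m.+1) ltac:(lia).
  have -> : (N.-1 - m.+1).+1 = N.-1 - m by lia.
  lia.
apply/permP => p; rewrite perm1; apply: val_inj.
have := lower p (ltn_ord p); have := upper (N.-1 - p) ltac:(lia).
have -> : N.-1 - (N.-1 - p) = p by have := ltn_ord p; lia.
by rewrite inord_val /=; lia.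
Qed.

Lemma wordp_of_ninv (m : nat) (x : S) : ninv x = m -> exists s, wordp s = x /\ size s = m.
Proof.
elim: m x => [|m IH] x hx.
  exists [::]; split=> //; rewrite wordp_nil; apply/esym/ascents_perm1 => i.
  by apply/negPn/negP => /ninv_si_descent; rewrite hx.
have : ~~ [forall i, ascent i x].
  by apply/negP => /forallP /ascents_perm1 x1; move: hx; rewrite x1 ninv1.
rewrite negb_forall => /existsP [i /ninv_si_descent].
rewrite hx => -[] /esym /IH [s [hs hsz]].
by exists (i :: s); rewrite wordp_cons hs siK /= hsz.
Qed.

Lemma reduced_expr_size s (w : S) : reduced_expr s w -> size s = ninv w.
Proof.
case=> hw hmin; case: (wordp_of_ninv (erefl (ninv w))) => s' [/hmin h1 h2].
by have := ninv_wordp s; rewrite hw; lia.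
Qed.

Section ChoiceMap.
Variable r : S -> seq 'I_n.+1.
Hypothesis Hr : choice_map r.

Lemma choice_one : r 1%g = [::].
Proof. by case: Hr. Qed.

Lemma choice_size w : size (r w) = ninv w.
Proof. by case: Hr => _ [h _]; apply: reduced_expr_size. Qed.

Lemma choice_word w : wordp (r w) = w.
Proof. by case: Hr => _ [h _]; case: (h w). Qed.

Lemma choice_step (w : S) : w != 1%g ->
  exists i, [/\ r w = i :: r (si i w), ascent i (si i w) & ninv w = (ninv (si i w)).+1].
Proof.
move=> hw; case: Hr => _ [_ /(_ w hw) [i hi]]; exists i.
have hs : ninv w = (ninv (si i w)).+1 by rewrite -!choice_size hi.
split=> //; have := ninv_si i (si i w); rewrite siK hs.
by case: ascent => //=; lia.
Qed.

Lemma choice_sgen (i : 'I_n.+1) : r (sgen i) = [:: i].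
Proof.
have sgenE : sgen i = si i 1 by rewrite /si mulg1.
have hinv : ninv (sgen i) = 1%N.
  by rewrite sgenE ninv_si_ascent ?ninv1 // /ascent !perm1 /= /bump /=; lia.
have hne : sgen i != 1%g by apply: contra_eqN hinv => /eqP ->; rewrite ninv1.
case: (choice_step hne) => k [hk _ _].
have := choice_size (sgen i); rewrite hinv hk => -[/size0nil r0].
have := choice_word (sgen i); rewrite hk r0 wordp_cons wordp_nil /si mulg1.
by move/sgen_inj ->.
Qed.

End ChoiceMap.
End Permutations.

Section HeckeCoordinates.
Variables (K : comPzRingType) (n : nat) (cS cR : K).
Local Notation S := ('S_n.+2).
Local Notation E := {ffun S -> K^o}.

(* Left multiplication by [h_i] in the coordinates [f |-> \sum_x f x h_x]:
   [h_i h_x] is [h_(s_i x)] when [s_i x] is longer than [x], and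
   [cS h_x + cR h_(s_i x)] otherwise. *)
Definition hmul_coord (i : 'I_n.+1) (f : E) : E :=
  [ffun x => if ascent i x then cR * f (si i x) else f (si i x) + cS * f x].

Lemma hmul_coordE i f x :
  hmul_coord i f x = if ascent i x then cR * f (si i x) else f (si i x) + cS * f x.
Proof. by rewrite ffunE. Qed.

Let scale_regE (a : K) (b : K^o) : a *: b = a * b. Proof. by []. Qed.

Lemma hmul_coord_braid (i k : 'I_n.+1) f : val k = (val i).+1 ->
  hmul_coord i (hmul_coord k (hmul_coord i f)) = hmul_coord k (hmul_coord i (hmul_coord k f)).
Proof.
move=> e; have [e1 d1 d2] := pos_adjacent e; apply/ffunP => x.
have d0 := posl_neq_posr i.
have sik y : si i y (posr k) = y (posr k) by apply: si_other.
have ski y : si k y (posl i) = y (posl i) by apply: si_other; rewrite 1?e1 eq_sym.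
have skr y : si k y (posr i) = y (posr k) by rewrite -e1 si_posl.
have skk y : si k y (posr k) = y (posr i) by rewrite si_posr e1.
have ascki y : ascent k y = (y (posr i) < y (posr k))%N by rewrite /ascent e1.
rewrite !hmul_coordE !ascki /ascent !(sik, ski, skr, skk, si_posl, si_posr) !siK (si_braid _ e).
move: (perm_val_neq x d0) (perm_val_neq x d1) (perm_val_neq x d2).
case: (x (posl i)) => a ha; case: (x (posr i)) => b hb; case: (x (posr k)) => c hc /= ab ac bc.
by case: (ltngtP a b) => ?; case: (ltngtP b c) => ?; case: (ltngtP a c) => ?;
  rewrite /=; try (exfalso; lia); ring.
Qed.

Lemma hmul_coord_rels : hecke_endo_rels cS cR hmul_coord.
Proof.
split=> [i a f g|i f|i k e f|i k e f]; apply/ffunP => x.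
- by rewrite !ffunE; case: ascent; rewrite !scale_regE; ring.
- by rewrite !ffunE ascent_si siK; case: ascent; rewrite /= !scale_regE; ring.
- by rewrite hmul_coord_braid.
- have [q1 q2 q3 q4] := pos_far e.
  have ascik y : ascent i (si k y) = ascent i y by apply: ascent_si_far; rewrite eq_sym.
  have ascki y : ascent k (si i y) = ascent k y by apply: ascent_si_far.
  rewrite !ffunE !ascik !ascki (si_commute _ e).
  by case: (ascent i x); case: (ascent k x); rewrite /=; ring.
Qed.

End HeckeCoordinates.

Section GroundModule.
Variables (K : comPzRingType) (n : nat).
Local Notation S := ('S_n.+2).
Variables (B Bd : algType K) (tBd : ('I_n.+2 -> B) -> Bd).
Hypothesis HBd : is_tensor_algpow tBd.
Variables (A : algType K) (j : Bd -> A) (H : 'I_n.+1 -> A).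
Hypothesis Hj : is_kalg_morph j.
Variable r : S -> seq 'I_n.+1.
Hypothesis Hr : choice_map r.
Local Notation Hw w := (wprod H (r w)).
Hypothesis Hleft : forall a : A, exists e : S -> Bd, a = \sum_g j (e g) * Hw g.
Hypothesis Hright : forall a : A, exists e : S -> Bd, a = \sum_g Hw g * j (e g).
Variables (chiS chiR : K) (Hc : algType K) (h : 'I_n.+1 -> Hc).
Hypothesis HHc : is_hecke_presentation h chiS chiR.
Variables (M MT : lmodType K) (actM : B -> M -> M).
Hypothesis HM : is_module actM.
Variable tM : ('I_n.+2 -> M) -> MT.
Hypothesis HtM : is_tensor_pow tM.
Variable actd : Bd -> MT -> MT.
Hypothesis Hactd : kbilinear actd /\
  forall x m, actd (tBd x) (tM m) = tM (fun k => actM (x k) (m k)).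
Variables (sigMi rhoMi : 'I_n.+1 -> MT -> MT).
Hypotheses (sigMi_lin : forall i, klinear (sigMi i)) (rhoMi_lin : forall i, klinear (rhoMi i)).
Variables (W : lmodType K) (tW : MT -> Hc -> W).
Hypothesis HtW : is_tensor2 tW.
Variable Phi : 'I_n.+1 -> W -> W.
Hypothesis HPhi : forall i, klinear (Phi i) /\ forall v y,
  Phi i (tW v y) = tW (sigMi i v) (h i * y) + tW (rhoMi i v) y.
Variable Lb : Bd -> W -> W.
Hypothesis HLb : forall b, klinear (Lb b) /\ forall v y, Lb b (tW v y) = tW (actd b v) y.
Variable Rh : Hc -> W -> W.
Hypothesis HRh : forall y, klinear (Rh y) /\ forall v y', Rh y (tW v y') = tW v (y' * y).
Hypothesis Hground : is_ground_module j H r tW Phi actd Lb Rh.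
Variables (Ind : lmodType K) (pI : A -> MT -> Ind).
Hypothesis HpI : is_btensor j actd pI.
Variable actI : A -> Ind -> Ind.
Hypothesis HactI : forall a, klinear (actI a) /\ forall a' v, actI a (pI a' v) = pI (a * a') v.
Variable actW : A -> W -> W.
Hypothesis HactW : (forall x, klinear (actW^~ x)) /\ (forall a, klinear (actW a)) /\
  forall b w v y, actW (j b * Hw w) (tW v y) = Lb b (Rh y (tau_of 1 tW Phi r w v)).

Local Notation tau w v := (tau_of 1 tW Phi r w v).

Lemma jM b c : j (b * c) = j b * j c. Proof. by case: Hj => _ []. Qed.

Lemma tW_linl y : klinear (tW^~ y). Proof. by case: HtW => /kbilinearl. Qed.
Lemma tW_linr v : klinear (tW v). Proof. by case: HtW => /kbilinearr. Qed.

Lemma actd_linl v : klinear (actd^~ v). Proof. exact: (kbilinearl Hactd.1). Qed.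
Lemma actd_linr b : klinear (actd b). Proof. exact: (kbilinearr Hactd.1). Qed.

Lemma actd1 v : actd 1 v = v.
Proof.
case: HBd => _ [<- _]; apply: (tensor_pow_ext HtM (actd_linr _) (@klinear_id _ MT)) => m.
by rewrite Hactd.2; congr tM; apply: funext => k; case: HM => _ [-> _].
Qed.

Lemma actdM b c v : actd (b * c) v = actd b (actd c v).
Proof.
case: HBd => Hpow [_ tBdM].
have mull (x : Bd) : klinear (fun b : Bd => b * x) by move=> a y z; rewrite mulrDl scalerAl.
have mulr (x : Bd) : klinear (fun b : Bd => x * b) by move=> a y z; rewrite mulrDr scalerAr.
move: b; apply: (tensor_pow_ext Hpow (klinear_comp (mull c) (actd_linl v)) (actd_linl _)) => x.
move: c; apply: (tensor_pow_ext Hpow (klinear_comp (mulr _) (actd_linl v))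
  (klinear_comp (actd_linl v) (actd_linr _))) => y /=.
move: v; apply: (tensor_pow_ext HtM (actd_linr _) (klinear_comp (actd_linr _) (actd_linr _))) => m.
by rewrite tBdM !Hactd.2; congr tM; apply: funext => k; case: HM => _ [_ ->].
Qed.

Lemma Lb_lin b : klinear (Lb b). Proof. by case: (HLb b). Qed.
Lemma LbE b v y : Lb b (tW v y) = tW (actd b v) y. Proof. by case: (HLb b). Qed.
Lemma Rh_lin y : klinear (Rh y). Proof. by case: (HRh y). Qed.
Lemma RhE y v y' : Rh y (tW v y') = tW v (y' * y). Proof. by case: (HRh y). Qed.
Lemma Phi_lin i : klinear (Phi i). Proof. by case: (HPhi i). Qed.
Lemma PhiE i v y : Phi i (tW v y) = tW (sigMi i v) (h i * y) + tW (rhoMi i v) y.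
Proof. by case: (HPhi i). Qed.

Lemma Lb1 u : Lb 1 u = u.
Proof.
move: u; apply: (tensor2_ext HtW (Lb_lin _) (@klinear_id _ W)) => v y.
by rewrite LbE actd1.
Qed.

Lemma LbM b c u : Lb (b * c) u = Lb b (Lb c u).
Proof.
move: u; apply: (tensor2_ext HtW (Lb_lin _) (klinear_comp (Lb_lin _) (Lb_lin _))) => v y.
by rewrite !LbE actdM.
Qed.

Lemma Rh_hecke_action : hecke_action true Rh.
Proof.
split=> [|a y y'|y|y y']; first exact: Rh_lin.
- apply: (tensor2_ext HtW (Rh_lin _) (klinear_add (klinear_scale a (Rh_lin y)) (Rh_lin y'))).
  by move=> v z; rewrite !RhE mulrDr -scalerAr (tW_linr v).
- apply: (tensor2_ext HtW (Rh_lin _) (@klinear_id _ W)) => v z.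
  by rewrite RhE mulr1.
- apply: (tensor2_ext HtW (Rh_lin _) (klinear_comp (Rh_lin _) (Rh_lin _))) => v z.
  by rewrite !RhE mulrA.
Qed.

Lemma Rh_linl u : klinear (Rh^~ u).
Proof. by case: Rh_hecke_action => _ RhD _ _ a y y'; apply: RhD. Qed.

Lemma Rh1 u : Rh 1 u = u. Proof. by case: Rh_hecke_action => _ _ ->. Qed.
Lemma RhM y y' u : Rh (y * y') u = Rh y' (Rh y u).
Proof. by case: Rh_hecke_action => _ _ _ ->. Qed.

Lemma LbRh b y u : Lb b (Rh y u) = Rh y (Lb b u).
Proof.
move: u; apply: (tensor2_ext HtW (klinear_comp (Rh_lin _) (Lb_lin _))
  (klinear_comp (Lb_lin _) (Rh_lin _))) => v z.
by rewrite !RhE !LbE RhE.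
Qed.

Definition tau_word (l : seq 'I_n.+1) (v : MT) : W := foldr Phi (tW v 1) l.

Lemma tau_word_lin l : klinear (tau_word l).
Proof. by elim: l => [|i l IH] /=; [exact: tW_linl | exact: (klinear_comp IH (Phi_lin i))]. Qed.

Lemma tau0 w : tau w 0 = 0.
Proof. exact: (klinear0 (tau_word_lin _)). Qed.

Lemma tau_word_pure l v : exists s : seq (MT * Hc), tau_word l v = \sum_(p <- s) tW p.1 p.2.
Proof.
elim: l => [|i l [s IH]] /=; first by exists [:: (v, 1)]; rewrite big_seq1.
exists ([seq (sigMi i p.1, h i * p.2) | p <- s] ++ [seq (rhoMi i p.1, p.2) | p <- s]).
rewrite /tau_word /= in IH *; rewrite IH (klinear_sum (Phi_lin i)) big_cat !big_map /=.
by rewrite (eq_bigr _ (fun p _ => PhiE i p.1 p.2)) big_split.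
Qed.

Lemma tau1 v : tau 1%g v = tW v 1.
Proof. by rewrite /tau_of (choice_one Hr). Qed.

Lemma Hw1 : Hw 1%g = 1. Proof. by rewrite (choice_one Hr) /wprod big_nil. Qed.
Lemma Hw_sgen i : Hw (sgen i) = H i. Proof. by rewrite (choice_sgen Hr) /wprod big_seq1. Qed.
Lemma Hw_j1 w : j 1 * Hw w = Hw w. Proof. by case: Hj => _ [-> _]; rewrite mul1r. Qed.

Lemma ground_mulj w b v (bg : S -> Bd) :
  Hw w * j b = \sum_g j (bg g) * Hw g ->
  tau w (actd b v) = \sum_g Lb (bg g) (tau g v).
Proof. by case: Hground => _ [+ _]; apply. Qed.

Lemma ground_mulHw w x v (c : S -> Bd) (s : seq (MT * Hc)) :
  Hw w * Hw x = \sum_g j (c g) * Hw g ->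
  tau x v = \sum_(p <- s) tW p.1 p.2 ->
  \sum_g Lb (c g) (tau g v) = \sum_(p <- s) Rh p.2 (tau w p.1).
Proof. by case: Hground => _ [_]; apply. Qed.

Lemma actW_linl u : klinear (actW^~ u). Proof. by case: HactW. Qed.
Lemma actW_lin a : klinear (actW a). Proof. by case: HactW => _ []. Qed.
Lemma actW_basis b w v y : actW (j b * Hw w) (tW v y) = Lb b (Rh y (tau w v)).
Proof. by case: HactW => _ [_]. Qed.

Lemma actW_sum (I : Type) (s : seq I) (F : I -> A) u :
  actW (\sum_(i <- s) F i) u = \sum_(i <- s) actW (F i) u.
Proof. exact: (klinear_sum (actW_linl u)). Qed.

Lemma actW_tW a v y : actW a (tW v y) = Rh y (actW a (tW v 1)).
Proof.
case: (Hleft a) => e ->; rewrite !actW_sum (klinear_sum (Rh_lin y)).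
by apply: eq_bigr => g _; rewrite !actW_basis Rh1 LbRh.
Qed.

Lemma actW_Rh a y u : actW a (Rh y u) = Rh y (actW a u).
Proof.
move: u; apply: (tensor2_ext HtW (klinear_comp (Rh_lin _) (actW_lin _))
  (klinear_comp (actW_lin _) (Rh_lin _))) => v z.
by rewrite RhE actW_tW (actW_tW a v z) RhM.
Qed.

Lemma actW_j b u : actW (j b) u = Lb b u.
Proof.
move: u; apply: (tensor2_ext HtW (actW_lin _) (Lb_lin _)) => v y.
by rewrite -[j b]mulr1 -Hw1 actW_basis tau1 RhE mul1r.
Qed.

(* Write [H_w j b'] and the products [H_g H_x] in left PBW form; the ground module
   axioms for [H_w b] and for [H_g H_x] then move [b'] past [H_w] and multiply
   [H_g] into [H_x]. *)
Lemma actW_basisM b w b' x v :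
  actW (j b * Hw w * (j b' * Hw x)) (tW v 1) =
  actW (j b * Hw w) (actW (j b' * Hw x) (tW v 1)).
Proof.
case: (Hleft (Hw w * j b')) => bg hbg.
have /choice [c hc] g : exists e : S -> Bd, Hw g * Hw x = \sum_k j (e k) * Hw k by apply: Hleft.
have -> : j b * Hw w * (j b' * Hw x) = \sum_g \sum_k j (b * bg g * c g k) * Hw k.
  rewrite mulrA -[j b * Hw w * j b']mulrA hbg mulr_sumr mulr_suml.
  apply: eq_bigr => g _; rewrite mulrA -jM -mulrA hc mulr_sumr.
  by apply: eq_bigr => k _; rewrite mulrA -jM.
case: (tau_word_pure (r x) v) => s hs.
rewrite actW_basis Rh1 [tau x v]hs (klinear_sum (Lb_lin b')) (klinear_sum (actW_lin _)).
rewrite (eq_bigr (fun p => \sum_g Lb b (Lb (bg g) (Rh p.2 (tau g p.1))))); last first.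
  move=> p _; rewrite LbE actW_basis (ground_mulj _ hbg) (klinear_sum (Rh_lin _)).
  by rewrite (klinear_sum (Lb_lin _)); apply: eq_bigr => g _; rewrite -LbRh.
rewrite [in RHS]exchange_big actW_sum; apply: eq_bigr => g _ /=.
rewrite -!(klinear_sum (Lb_lin _)) -(ground_mulHw (hc g) hs) !(klinear_sum (Lb_lin _)).
by rewrite actW_sum; apply: eq_bigr => k _; rewrite actW_basis Rh1 !LbM.
Qed.

Lemma actWM a a' u : actW (a * a') u = actW a (actW a' u).
Proof.
move: u; apply: (tensor2_ext HtW (actW_lin _) (klinear_comp (actW_lin _) (actW_lin _))) => v y.
rewrite actW_tW [in RHS](actW_tW a') actW_Rh; congr Rh.
case: (Hleft a) => e ->; case: (Hleft a') => e' ->.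
rewrite mulr_suml !actW_sum; apply: eq_bigr => w _.
rewrite mulr_sumr actW_sum (klinear_sum (actW_lin _)).
by apply: eq_bigr => x _; rewrite actW_basisM.
Qed.

Lemma pI_linl v : klinear (pI^~ v). Proof. by case: HpI => [[/kbilinearl]]. Qed.
Lemma pI_linr a : klinear (pI a). Proof. by case: HpI => [[/kbilinearr]]. Qed.
Lemma pI_balanced a b v : pI (a * j b) v = pI a (actd b v). Proof. by case: HpI => [[_ ->]]. Qed.

Lemma actW_tW1_balanced : kbalanced j actd (fun a v => actW a (tW v 1)).
Proof.
split; first split=> [v|a]; first exact: actW_linl.
- exact: (klinear_comp (tW_linl 1) (actW_lin a)).
- by move=> a b v; rewrite actWM actW_j LbE.
Qed.

Section InducedMap.
Variable F : Ind -> W.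
Hypotheses (F_lin : klinear F) (FE : forall a v, F (pI a v) = actW a (tW v 1)).

Lemma F_Hw w v : F (pI (Hw w) v) = tau w v.
Proof. by rewrite FE -Hw_j1 actW_basis Lb1 Rh1. Qed.

Lemma F_pI1 v : F (pI 1 v) = tW v 1.
Proof. by rewrite -Hw1 F_Hw tau1. Qed.

Lemma F_actI a x : F (actI a x) = actW a (F x).
Proof.
move: x; apply: (btensor_ext HpI (klinear_comp (HactI a).1 F_lin)
  (klinear_comp F_lin (actW_lin a))) => a' v.
by rewrite (HactI a).2 !FE actWM.
Qed.

Hypothesis sigMi_bij : forall i, bijective (sigMi i).

Definition sigma_word (w : S) (v : MT) : MT := foldr sigMi v (r w).

Lemma sigma_word_eq0 w v : sigma_word w v = 0 -> v = 0.
Proof.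
rewrite /sigma_word; elim: (r w) => [//|i l IH] /= e; apply: IH.
case: (sigMi_bij i) => g g1 g2.
by rewrite -[LHS]g1 e -{1}(klinear0 (sigMi_lin i)) g1.
Qed.

Lemma ind_span_Hw z : exists xz : S -> MT, z = \sum_g pI (Hw g) (xz g).
Proof.
case: (btensor_pure_sum HpI z) => s ->; elim: s => [|[a v] s [xz IH]].
  by exists (fun=> 0); rewrite big_nil big1 // => g _; rewrite (klinear0 (pI_linr _)).
case: (Hright a) => e ->; exists (fun g => actd (e g) v + xz g).
rewrite big_cons IH /= (klinear_sum (pI_linl v)) -big_split /=.
by apply: eq_bigr => g _; rewrite pI_balanced (klinearD (pI_linr _)).
Qed.

Section Injectivity.
Local Notation E := {ffun S -> K^o}.
Variable coord : Hc -> E.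
Hypotheses (coord1 : coord 1 = [ffun x => (x == 1%g)%:R])
  (coord_h : forall i y, coord (h i * y) = hmul_coord chiS chiR i (coord y)).
Variable expand : W -> {ffun S -> MT}.
Hypotheses (expand_lin : klinear expand)
  (expandE : forall v y, expand (tW v y) = [ffun x => coord y x *: v]).

Lemma ffun_pull_linear (c : S -> K) (L : MT -> MT) (p : S -> S) : klinear L ->
  klinear (fun f : {ffun S -> MT} => [ffun x => c x *: L (f (p x))]).
Proof. by move=> hL a f g; apply/ffunP => x; rewrite !ffunE hL scalerDr !scalerA mulrC. Qed.

Definition Phi_coord i (f : {ffun S -> MT}) : {ffun S -> MT} :=
  [ffun x => (if ascent i x then chiR else 1) *: sigMi i (f (si i x))]
  + [ffun x => (if ascent i x then 0 else chiS) *: sigMi i (f x)]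
  + [ffun x => 1 *: rhoMi i (f x)].

Lemma Phi_coord_lin i : klinear (Phi_coord i).
Proof.
rewrite /Phi_coord; apply: klinear_add; first apply: klinear_add.
all: exact: ffun_pull_linear.
Qed.

Lemma expand_Phi i u : expand (Phi i u) = Phi_coord i (expand u).
Proof.
move: u; apply: (tensor2_ext HtW (klinear_comp (Phi_lin i) expand_lin)
  (klinear_comp expand_lin (Phi_coord_lin i))) => v y.
rewrite PhiE (klinearD expand_lin) !expandE; apply/ffunP => x.
rewrite !ffunE coord_h hmul_coordE !(klinearZ (sigMi_lin i)) !(klinearZ (rhoMi_lin i)).
by case: ascent; rewrite /= ?scale0r ?addr0 !scale1r ?scalerDl scalerA.
Qed.

Lemma expand_tau w v x : (ninv w <= ninv x)%N ->
  expand (tau w v) x = if x == w then sigma_word w v else 0.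
Proof.
move def_m : (ninv w) => m; elim: m w v x def_m => [|m IH] w v x hw hx.
  have -> : w = 1%g by case: (wordp_of_ninv hw) => s [<- /size0nil ->]; rewrite wordp_nil.
  rewrite tau1 expandE coord1 !ffunE /sigma_word (choice_one Hr) /=.
  by case: (x == 1%g); rewrite /= ?scale1r ?scale0r.
have [i [rw up_w' hw']] : exists i, [/\ r w = i :: r (si i w), ascent i (si i w)
    & ninv w = (ninv (si i w)).+1].
  by apply: (choice_step Hr); apply: contra_eqN hw => /eqP ->; rewrite ninv1.
set w' := si i w in rw up_w' hw'; have {}hw' : ninv w' = m by move: hw; rewrite hw' => -[].
have -> : tau w v = Phi i (tau w' v) by rewrite /tau_of rw.
have IHx : expand (tau w' v) x = 0.
  by rewrite (IH _ v _ hw'); [case: eqP => // e; move: hx; rewrite e | ]; lia.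
rewrite expand_Phi !ffunE IHx (klinear0 (sigMi_lin i)) (klinear0 (rhoMi_lin i)) !scaler0 !addr0.
case hu : (ascent i x).
  have hs := ninv_si_ascent hu.
  rewrite (IH _ v _ hw'); last by lia.
  have -> : (si i x == w') = false by apply/negbTE/eqP => e; move: hs; rewrite e; lia.
  rewrite (klinear0 (sigMi_lin i)) scaler0; case: eqP => // e.
  move: hu; rewrite e; have -> : w = si i w' by rewrite /w' siK.
  by rewrite ascent_si up_w'.
have hs := ninv_si_descent (negbT hu).
rewrite (IH _ v _ hw'); last by lia.
rewrite [si i x == w'](inj_eq (@si_inj n i)) scale1r.
by case: eqP => _; [rewrite /sigma_word rw | exact: (klinear0 (sigMi_lin i))].
Qed.

(* By triangularity, the [h_w]-coefficient of [F z] for a longest [w] with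
   [xz w != 0] is [sigma_word w (xz w)]. *)
Lemma F_inj_coord : injective F.
Proof.
move=> z1 z2 e; apply/eqP; rewrite -subr_eq0; apply/eqP.
have : F (z1 - z2) = 0 by rewrite (klinearB F_lin) e subrr.
case: (ind_span_Hw (z1 - z2)) => xz -> hF.
suff xz0 g : xz g = 0 by rewrite big1 // => g _; rewrite xz0 (klinear0 (pI_linr _)).
apply/eqP/negPn/negP => /(@arg_maxnP _ g (fun g => xz g != 0) (@ninv n)) [w hw wmax].
move: hw; suff -> : xz w = 0 by rewrite eqxx.
apply: (@sigma_word_eq0 w); apply/esym.
move/(congr1 (fun u => expand u w)): hF; rewrite (klinear0 expand_lin) ffunE => <-.
rewrite (klinear_sum F_lin) (klinear_sum expand_lin) sum_ffunE (bigD1 w) //= F_Hw.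
rewrite expand_tau // eqxx big1 ?addr0 // => k kw; rewrite F_Hw.
case: (eqVneq (xz k) 0) => [->|xk].
  by rewrite tau0 (klinear0 expand_lin) ffunE.
rewrite expand_tau; last exact: wmax.
by rewrite eq_sym (negbTE kw).
Qed.

End Injectivity.

Lemma F_inj : injective F.
Proof.
case: (hecke_action_exists HHc false (@hmul_coord_rels _ n chiS chiR)).
move=> ev [[_ ev_lin ev1 evM] evh].
pose coord y := ev y [ffun x => (x == 1%g)%:R].
have expand_bil : kbilinear (fun v y => [ffun x => coord y x *: v] : {ffun S -> MT}).
  split=> [y a v v'|v a y y']; apply/ffunP => x; rewrite !ffunE.
  - by rewrite scalerDr !scalerA mulrC.
  - by rewrite /coord ev_lin !ffunE scalerDl scalerA.
case: (tensor2_lift HtW expand_bil) => expand [expand_lin expandE].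
by apply: (F_inj_coord _ _ expand_lin expandE) => [|i y]; rewrite /coord ?ev1 // evM evh.
Qed.

Section RightAction.
Variable sinv : 'I_n.+1 -> MT -> MT.
Hypothesis sinvK : forall i v, sigMi i (sinv i v) = v.

Lemma sinv_lin i : klinear (sinv i).
Proof. by move=> a x y; apply: (bij_inj (sigMi_bij i)); rewrite (sigMi_lin i) !sinvK. Qed.

(* Solving [Phi i (v (x) 1) = sigMi i v (x) h_i + rhoMi i v (x) 1] for [v (x) h_i]
   gives the right action of [h_i] on the induced module. *)
Definition hmul_ind i a v := pI (a * H i) (sinv i v) - pI a (rhoMi i (sinv i v)).

Lemma F_hmul_ind i a v : F (hmul_ind i a v) = actW a (tW v (h i)).
Proof.
have actW_H u : actW (H i) (tW u 1) = Phi i (tW u 1).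
  by rewrite -Hw_sgen -Hw_j1 actW_basis Lb1 Rh1 /tau_of (choice_sgen Hr).
rewrite (klinearB F_lin) !FE actWM actW_H PhiE mulr1 sinvK.
by rewrite (klinearD (actW_lin a)) addrK.
Qed.

Lemma hmul_ind_balanced i : kbalanced j actd (hmul_ind i).
Proof.
have mulH : klinear (fun a : A => a * H i) by move=> a x y; rewrite mulrDl scalerAl.
split; first split=> [v|a].
- exact: (klinear_add (klinear_comp mulH (pI_linl _)) (klinear_opp (pI_linl _))).
- exact: (klinear_add (klinear_comp (sinv_lin i) (pI_linr _))
    (klinear_opp (klinear_comp (klinear_comp (sinv_lin i) (rhoMi_lin i)) (pI_linr _)))).
- by move=> a b v; apply: F_inj; rewrite !F_hmul_ind actWM actW_j LbE.
Qed.

Variable Psi : 'I_n.+1 -> Ind -> Ind.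
Hypotheses (Psi_lin : forall i, klinear (Psi i))
  (PsiE : forall i a v, Psi i (pI a v) = hmul_ind i a v).

Lemma F_Psi i z : F (Psi i z) = Rh (h i) (F z).
Proof.
move: z; apply: (btensor_ext HpI (klinear_comp (Psi_lin i) F_lin)
  (klinear_comp F_lin (Rh_lin _))) => a v.
by rewrite PsiE F_hmul_ind FE -actW_Rh RhE mul1r.
Qed.

Lemma Psi_rels : hecke_endo_rels chiS chiR Psi.
Proof.
case: HHc => [[[hb hc] hq] _].
split=> [//|i z|i k e z|i k e z]; apply: F_inj; rewrite !F_Psi -!RhM.
- rewrite hq (klinearD (Rh_linl _)) !(klinearZ (Rh_linl _)) Rh1.
  by rewrite (klinearD F_lin) !(klinearZ F_lin) F_Psi.
- by rewrite !mulrA (hb _ _ e).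
- by rewrite (hc _ _ e).
Qed.

End RightAction.

Lemma F_bijective : bijective F.
Proof.
have /choice [sinv sinvK] i : exists g, forall v, sigMi i (g v) = v.
  by case: (sigMi_bij i) => g _ gK; exists g.
have /choice [Psi PsiP] i : exists P : Ind -> Ind,
    klinear P /\ forall a v, P (pI a v) = hmul_ind sinv i a v.
  by apply: (btensor_lift HpI); apply: hmul_ind_balanced.
have rels := Psi_rels sinvK (fun i => (PsiP i).1) (fun i => (PsiP i).2).
case: (hecke_action_exists HHc true rels) => ev [ev_act evh].
have F_ev : forall y z, F (ev y z) = Rh y (F z).
  apply: (hecke_action_intertwine HHc ev_act Rh_hecke_action F_lin) => i z.
  by rewrite evh (F_Psi sinvK (fun i => (PsiP i).1) (fun i => (PsiP i).2)).
have G_bil : kbilinear (fun v y => ev y (pI 1 v)).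
  case: ev_act => ev_lin ev_linl _ _; split=> [y|v a y y'].
  - exact: (klinear_comp (pI_linr 1) (ev_lin y)).
  - exact: ev_linl.
case: (tensor2_lift HtW G_bil) => G [G_lin GE].
have FG : forall u, F (G u) = u.
  apply: (tensor2_ext HtW (klinear_comp G_lin F_lin) (@klinear_id _ W)) => v y.
  by rewrite GE F_ev F_pI1 RhE mul1r.
by exists G => // z; apply: F_inj; rewrite FG.
Qed.

End InducedMap.

Theorem tau_ind_isomorphism : exists F : Ind -> W,
  klinear F /\
  (forall w v, F (pI (Hw w) v) = tau w v) /\
  (forall a x, F (actI a x) = actW a (F x)) /\
  ((forall i, bijective (sigMi i)) -> bijective F).
Proof.
case: (btensor_lift HpI actW_tW1_balanced) => F [F_lin FE].
exists F; split=> //; split; first exact: F_Hw.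
by split=> [|sigMi_bij]; [exact: F_actI | exact: F_bijective].
Qed.

End GroundModule.

Section PBWSpanning.
Variables (K : comPzRingType) (A Bd : algType K) (j : Bd -> A) (T : finType).
Hypothesis j_lin : klinear j.
Variables (Hw : T -> A) (I : Type) (e : I -> Bd) (g : I -> T).

Lemma sum_fibers (V : lmodType K) (s : seq I) (F : I -> V) :
  \sum_(i <- s) F i = \sum_(t : T) \sum_(i <- s | g i == t) F i.
Proof.
rewrite (exchange_big_dep xpredT) //=; apply: eq_bigr => i _.
by rewrite (big_pred1 (g i)) // => t; rewrite eq_sym.
Qed.

Lemma pbw_span_left :
  (forall a, exists s (c : I -> K), a = \sum_(i <- s) c i *: (j (e i) * Hw (g i))) ->
  forall a, exists f : T -> Bd, a = \sum_t j (f t) * Hw t.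
Proof.
move=> span a; case: (span a) => s [c ->].
exists (fun t => \sum_(i <- s | g i == t) c i *: e i); rewrite sum_fibers.
apply: eq_bigr => t _; rewrite (klinear_sum j_lin) mulr_suml.
by apply: eq_big => // i /eqP <-; rewrite (klinearZ j_lin) scalerAl.
Qed.

Lemma pbw_span_right :
  (forall a, exists s (c : I -> K), a = \sum_(i <- s) c i *: (Hw (g i) * j (e i))) ->
  forall a, exists f : T -> Bd, a = \sum_t Hw t * j (f t).
Proof.
move=> span a; case: (span a) => s [c ->].
exists (fun t => \sum_(i <- s | g i == t) c i *: e i); rewrite sum_fibers.
apply: eq_bigr => t _; rewrite (klinear_sum j_lin) mulr_sumr.
by apply: eq_big => // i /eqP <-; rewrite (klinearZ j_lin) scalerAr.
Qed.

End PBWSpanning.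

Unset Implicit Arguments.
Theorem theorem5p3
  (K : comPzRingType) (n : nat) (* d = n.+2 >= 2 *)
  (* B, B (x) B, B^{(x) d} *)
  (B B2 Bd : algType K) (tB2 : B -> B -> B2) (tBd : ('I_n.+2 -> B) -> Bd)
  (HB2 : is_tensor_alg2 tB2) (HBd : is_tensor_algpow tBd)
  (* S, R, sigma, rho and their versions at positions i, i+1 *)
  (S R : B2) (sigma rho : B2 -> B2) (Hsigma : klinear sigma) (Hrho : klinear rho)
  (Si Ri : 'I_n.+1 -> Bd) (HSi : loc_elt tBd tB2 S Si) (HRi : loc_elt tBd tB2 R Ri)
  (sigB rhoB : 'I_n.+1 -> Bd -> Bd)
  (HsigB : loc_ext tBd tB2 sigma sigB) (HrhoB : loc_ext tBd tB2 rho rhoB)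
  (* the wreath algebra B wr H(d), with choice map r and H_w := H along r(w) *)
  (A : algType K) (j : Bd -> A) (H : 'I_n.+1 -> A)
  (HA : is_wreath_presentation j H Si Ri sigB rhoB)
  (r : 'S_n.+2 -> seq 'I_n.+1) (Hr : choice_map r)
  (HPBW : exists (I : eqType) (bas : I -> B), is_basis bas /\
     is_basis (fun p : {ffun 'I_n.+2 -> I} * 'S_n.+2 =>
                 j (tBd (fun k => bas (p.1 k))) * wprod H (r p.2)) /\
     is_basis (fun p : {ffun 'I_n.+2 -> I} * 'S_n.+2 =>
                 wprod H (r p.2) * j (tBd (fun k => bas (p.1 k)))))
  (* the twisted Hecke algebra *)
  (chiS chiR : K) (Hc : algType K) (h : 'I_n.+1 -> Hc)
  (HHc : is_hecke_presentation h chiS chiR)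
  (* the module M, M (x) M, M^{(x) d} *)
  (M M2 MT : lmodType K) (actM : B -> M -> M) (HM : is_module actM)
  (t2M : M -> M -> M2) (Ht2M : is_tensor2 t2M)
  (tM : ('I_n.+2 -> M) -> MT) (HtM : is_tensor_pow tM)
  (act2 : B2 -> M2 -> M2)
  (Hact2 : kbilinear act2 /\
     forall b c m m', act2 (tB2 b c) (t2M m m') = t2M (actM b m) (actM c m'))
  (HSR : forall z, act2 S z = chiS *: z /\ act2 R z = chiR *: z)
  (actd : Bd -> MT -> MT)
  (Hactd : kbilinear actd /\
     forall x m, actd (tBd x) (tM m) = tM (fun k => actM (x k) (m k)))
  (sigmaM rhoM : M2 -> M2) (HsigmaM : klinear sigmaM) (HrhoM : klinear rhoM)
  (sigMi rhoMi : 'I_n.+1 -> MT -> MT)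
  (HsigMi : loc_ext tM t2M sigmaM sigMi) (HrhoMi : loc_ext tM t2M rhoM rhoMi)
  (* W = M^{(x) d} (x) Hc and the operators used to define tau^M *)
  (W : lmodType K) (tW : MT -> Hc -> W) (HtW : is_tensor2 tW)
  (Phi : 'I_n.+1 -> W -> W)
  (HPhi : forall i, klinear (Phi i) /\ forall v y,
     Phi i (tW v y) = tW (sigMi i v) (h i * y) + tW (rhoMi i v) y)
  (Lb : Bd -> W -> W)
  (HLb : forall b, klinear (Lb b) /\ forall v y, Lb b (tW v y) = tW (actd b v) y)
  (Rh : Hc -> W -> W)
  (HRh : forall y, klinear (Rh y) /\ forall v y', Rh y (tW v y') = tW v (y' * y))
  (* (M, sigma^M, rho^M) is a ground module *)
  (Hground : is_ground_module j H r tW Phi actd Lb Rh)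
  (* ind_{1^d}^d (M^{(x)d}) = A (x)_{Bd} M^{(x)d} with its left A-action *)
  (Ind : lmodType K) (pI : A -> MT -> Ind) (HpI : is_btensor j actd pI)
  (actI : A -> Ind -> Ind)
  (HactI : forall a, klinear (actI a) /\ forall a' v, actI a (pI a' v) = pI (a * a') v)
  (* the A-action on M wr Hc *)
  (actW : A -> W -> W)
  (HactW : (forall x, klinear (fun a => actW a x)) /\ (forall a, klinear (actW a)) /\
     forall b w v y, actW (j b * wprod H (r w)) (tW v y) =
                     Lb b (Rh y (tau_of 1 tW Phi r w v))) :
  exists F : Ind -> W,
    klinear F /\
    (forall w v, F (pI (wprod H (r w)) v) = tau_of 1 tW Phi r w v) /\
    (forall a x, F (actI a x) = actW a (F x)) /\
    ((forall i, bijective (sigMi i)) -> bijective F).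
Proof.
have Hj : is_kalg_morph j by case: HA.
have j_lin : klinear j by case: Hj.
case: HPBW => I [bas [_ [[spanL _] [spanR _]]]].
have Hleft := pbw_span_left (Hw := fun w => wprod H (r w)) (g := snd) j_lin spanL.
have Hright := pbw_span_right (Hw := fun w => wprod H (r w)) (g := snd) j_lin spanR.
have sigMi_lin i : klinear (sigMi i) by case: (HsigMi i).
have rhoMi_lin i : klinear (rhoMi i) by case: (HrhoMi i).
exact: (tau_ind_isomorphism HBd Hj Hr Hleft Hright HHc HM HtM Hactd sigMi_lin rhoMi_lin
  HtW HPhi HLb HRh Hground HpI HactI HactW).
Qed.
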